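(* Let $*\in\{s,w\}$. 1. For every matroid $M$ (an element of $\operatorname{Gr}(r,\mathbb{K}^n)$), the realization spaces $\operatorname{Real}^*_{\triangle}(M)$ and $\operatorname{Real}_{\mathcal{T}\triangle}(M)$ are contractible. These are taken with respect to the unique morphisms $\triangle\to\mathbb{K}$ and $\mathcal{T}\triangle\to\mathbb{K}$. 2. For every oriented matroid $M$ (an element of $\operatorname{Gr}(r,\mathbb{S}^n)$), $\operatorname{Real}_{\mathcal{T}\mathbb{R}}(M)$ is contractible. This is taken with respect to $\operatorname{ph}:\mathcal{T}\mathbb{R}\to\mathbb{S}$. 3. For every $M\in\operatorname{Gr}^*(r,\Phi^n)$, $\operatorname{Real}^*_{\mathcal{T}\mathbb{C}}(M)$ is contractible. This is taken with respect to $\operatorname{ph}:\mathcal{T}\mathbb{C}\to\Phi$. In particular all these realization spaces are nonempty.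
   Context: Hyperfields. A hyperfield $(F,\odot,\boxplus,1,0)$ has the following data and axioms. - $\odot$ is a commutative multiplication and $\boxplus$ is a hyperaddition assigning to each $x,y$ a nonempty subset $x\boxplus y\subseteq F$ (extended to subsets by unions). - $\boxplus$ is commutative and associative, and $x\boxplus 0=\{x\}$. - Each $x$ has a unique $-x$ with $0\in x\boxplus(-x)$, and $x\in y\boxplus z \iff z\in x\boxplus(-y)$. - $(F\setminus\{0\},\odot,1)$ is an abelian group $F^\times$, $0\odot x=0$, and $x\odot(y\boxplus z)=(x\odot y)\boxplus(x\odot z)$. A homomorphism (morphism) $h$ satisfies $h(0)=0$, $h(1)=1$, $h(xy)=h(x)h(y)$ and $h(x\boxplus y)\subseteq h(x)\boxplus h(y)$. Hyperfields, all with multiplication that of $\mathbb{C}$. - $\mathbb{K}=\{0,1\}$ with $1\boxplus1=\{0,1\}$. - $\mathbb{S}=\{-1,0,1\}$ with $1\boxplus1=\{1\}$, $(-1)\boxplus(-1)=\{-1\}$, $1\boxplus(-1)=\{-1,0,1\}$. - $\Phi=S^1\cup\{0\}$ with $a\boxplus a=\{a\}$ and $a\boxplus(-a)=S^1\cup\{0\}$; for $b\ne\pm a$, $a\boxplus b$ is the shortest closed arc joining $a,b$. - $\triangle=\mathbb{R}_{\ge0}$ with $a\boxplus b=[|a-b|,a+b]$. - $\mathcal{T}\triangle=\mathbb{R}_{\ge0}$ with $a\boxplus b=\{\max(a,b)\}$ if $a\ne b$, and $a\boxplus a=[0,a]$. - $\mathcal{T}\mathbb{R}=\mathbb{R}$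 with $a\boxplus b=\{a\}$ if $|a|>|b|$ or $a=b$, and $a\boxplus(-a)=[-|a|,|a|]$. - $\mathcal{T}\mathbb{C}=\mathbb{C}$ with: $a\boxplus b=\{a\}$ if $|a|>|b|$; $a\boxplus(-a)=\{x:|x|\le|a|\}$; if $|a|=|b|$ and $b\ne-a$, $a\boxplus b$ is the shortest closed arc from $a$ to $b$ on the circle of radius $|a|$. $\triangle,\mathcal{T}\triangle,\mathcal{T}\mathbb{R},\mathcal{T}\mathbb{C}$ are topologized with the Euclidean topology. Equivalently, the resulting realization spaces are the same if one uses the 0-coarse topology, whose open sets are the whole space and the Euclidean-open sets not containing $0$. $\operatorname{ph}(x)=x/|x|$ for $x\ne0$, and $\operatorname{ph}(0)=0$. The unique morphism to $\mathbb{K}$ sends $0\mapsto0$ and nonzero elements to $1$. Grassmannians. A strong Grassmann–Plücker (GP) function of rank $r$ on $E=\{1,\dots,n\}$ is a function $\varphi:E^r\to F$ with the following properties. - $\varphi$ is not identically $0$. - $\varphi$ is alternating. - For all $(i_1,\dots,i_{r+1})\in E^{r+1}$ and $(j_1,\dots,j_{r-1})\in E^{r-1}$: $$0\in\boxplus_{k=1}^{r+1}(-1)^k\varphi(i_1,\dots,\widehat{i_k},\dots,i_{r+1})\odot\varphi(i_k,j_1,\dots,j_{r-1}).$$ A weak GP function is a function $\varphi:E^r\to F$ with the following properties. - $\varphi$ is nonzero and alternating. - Its support is the set of bases of a matroid. - The relation holds whenever $|\{i\}\setminus\{j\}|=3$. $\operatorname{Gr}^s$ and $\operatorname{Gr}^w$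 are the sets of classes modulo $\varphi\sim\alpha\varphi$, $\alpha\in F^\times$. For $\mathbb{K},\mathbb{S},\mathcal{T}\mathbb{R},\mathcal{T}\triangle$ strong and weak coincide, and one writes $\operatorname{Gr}$ and $\operatorname{Real}$. The topology is the subspace topology of $(F^{E^r}\setminus\{0\})/F^\times$, which carries the product and quotient topologies. Realization spaces. For a morphism $f:F\to F'$ and $M\in\operatorname{Gr}^*(r,F'^n)$, $\operatorname{Real}^*_F(M)$ is the preimage of $M$ under $[\varphi]\mapsto[f\circ\varphi]$, with the subspace topology of $\operatorname{Gr}^*(r,F^n)$. *)

From Stdlib Require Import Reals List Arith.
Import ListNotations.
Open Scope R_scope.

Definition C := (R * R)%type.
Definition c0 : C := (0, 0).
Definition c1 : C := (1, 0).
Definition cadd (z w : C) : C := (fst z + fst w, snd z + snd w).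
Definition cneg (z : C) : C := (- fst z, - snd z).
Definition csub (z w : C) : C := cadd z (cneg w).
Definition cmul (z w : C) : C :=
  (fst z * fst w - snd z * snd w, fst z * snd w + snd z * fst w).
Definition cscale (s : R) (z : C) : C := (s * fst z, s * snd z).
Definition cnorm (z : C) : R := sqrt (fst z ^ 2 + snd z ^ 2).

Definition Ceq_dec (z w : C) : {z = w} + {z <> w}.
Proof. decide equality; apply Req_EM_T. Defined.

Definition ph (z : C) : C :=
  if Req_EM_T (cnorm z) 0 then c0 else cscale (/ cnorm z) z.

(** the unique morphism to the Krasner hyperfield *)
Definition toK (z : C) : C := if Ceq_dec z c0 then c0 else c1.

(** * Hyperfields embedded in the complex numbers: carrier subset, hyperaddition
    ([hadd x y z] means z ∈ x ⊞ y) and hyperfield negation.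
    Multiplication is that of C, 0 = c0, 1 = c1. *)
Record hyperfield := mkHF {
  hdom : C -> Prop;
  hadd : C -> C -> C -> Prop;
  hneg : C -> C }.

(** z lies on the shortest closed arc from a to b on the circle of radius |a|
    (used only when |a| = |b| and b <> -a) *)
Definition on_arc (a b z : C) : Prop :=
  exists s t, 0 <= s /\ 0 <= t /\ (s <> 0 \/ t <> 0) /\
    z = cscale (cnorm a) (ph (cadd (cscale s a) (cscale t b))).

Definition HK : hyperfield := mkHF
  (fun z => z = c0 \/ z = c1)
  (fun x y z => (x = c0 /\ z = y) \/ (y = c0 /\ z = x) \/
                (x = c1 /\ y = c1 /\ (z = c0 \/ z = c1)))
  (fun z => z).

Definition S_dom (z : C) : Prop := z = c0 \/ z = c1 \/ z = cneg c1.
Definition HS : hyperfield := mkHF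
  S_dom
  (fun x y z => (x = c0 /\ z = y) \/ (y = c0 /\ z = x) \/
                (x <> c0 /\ y = x /\ z = x) \/
                (x <> c0 /\ y = cneg x /\ S_dom z))
  cneg.

Definition Phi_dom (z : C) : Prop := z = c0 \/ cnorm z = 1.
Definition HPhi : hyperfield := mkHF
  Phi_dom
  (fun x y z => (x = c0 /\ z = y) \/ (y = c0 /\ z = x) \/
                (x <> c0 /\ y = cneg x /\ Phi_dom z) \/
                (x <> c0 /\ y <> c0 /\ y <> cneg x /\ on_arc x y z))
  cneg.

Definition Rnn_dom (z : C) : Prop := snd z = 0 /\ 0 <= fst z.

Definition Htri : hyperfield := mkHF
  Rnn_dom
  (fun x y z => Rnn_dom z /\ Rabs (fst x - fst y) <= fst z <= fst x + fst y)
  (fun z => z).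

Definition HTtri : hyperfield := mkHF
  Rnn_dom
  (fun x y z => (fst x <> fst y /\ z = (Rmax (fst x) (fst y), 0)) \/
                (x = y /\ Rnn_dom z /\ fst z <= fst x))
  (fun z => z).

Definition HTR : hyperfield := mkHF
  (fun z => snd z = 0)
  (fun x y z => (Rabs (fst x) > Rabs (fst y) /\ z = x) \/
                (Rabs (fst y) > Rabs (fst x) /\ z = y) \/
                (x = y /\ z = x) \/
                (y = cneg x /\ snd z = 0 /\ Rabs (fst z) <= Rabs (fst x)))
  cneg.

Definition HTC : hyperfield := mkHF
  (fun _ => True)
  (fun x y z => (cnorm x > cnorm y /\ z = x) \/
                (cnorm y > cnorm x /\ z = y) \/
                (y = cneg x /\ cnorm z <= cnorm x) \/
                (cnorm x = cnorm y /\ y <> cneg x /\ on_arc x y z))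
  cneg.

Fixpoint hsum (F : hyperfield) (l : list C) (z : C) : Prop :=
  match l with
  | nil => z = c0
  | a :: l' => exists y, hsum F l' y /\ hadd F a y z
  end.

(** * Functions E^r -> F, E = {0,...,n-1}.
    A function E^r -> F is encoded as a map [list nat -> C] that vanishes
    off the valid tuples (length r, entries < n). *)
Definition valid (n r : nat) (l : list nat) : Prop :=
  length l = r /\ Forall (fun i => (i < n)%nat) l.

Definition Ffun (F : hyperfield) (n r : nat) (phi : list nat -> C) : Prop :=
  (forall l, hdom F (phi l)) /\ (forall l, ~ valid n r l -> phi l = c0).

Definition Adom (F : hyperfield) (n r : nat) (phi : list nat -> C) : Prop :=
  Ffun F n r phi /\ exists l, valid n r l /\ phi l <> c0.

Definition swap_at (i j : nat) (l : list nat) : list nat :=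
  map (fun k => if Nat.eqb k i then nth j l 0%nat
                else if Nat.eqb k j then nth i l 0%nat else nth k l 0%nat)
      (seq 0 (length l)).

Definition alternating (F : hyperfield) (n r : nat) (phi : list nat -> C) : Prop :=
  (forall l, valid n r l -> ~ NoDup l -> phi l = c0) /\
  (forall l i j, valid n r l -> (i < j)%nat -> (j < r)%nat ->
     phi (swap_at i j l) = hneg F (phi l)).

Definition remove_at (k : nat) (l : list nat) : list nat :=
  firstn k l ++ skipn (S k) l.

(** the terms (-1)^k φ(i_1..î_k..i_{r+1}) φ(i_k,j_1..j_{r-1}), k = 1..r+1
    (0-based index k here, sign (-1)^(k+1)) *)
Definition gp_terms (F : hyperfield) (r : nat) (phi : list nat -> C)
    (i j : list nat) : list C :=
  map (fun k => cmul (Nat.iter (S k) (hneg F) c1)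
                     (cmul (phi (remove_at k i)) (phi (nth k i 0%nat :: j))))
      (seq 0 (S r)).

Definition matroid_support (n r : nat) (phi : list nat -> C) : Prop :=
  forall l1 l2, valid n r l1 -> valid n r l2 -> phi l1 <> c0 -> phi l2 <> c0 ->
    forall x, In x l1 -> ~ In x l2 ->
      exists y, In y l2 /\ ~ In y l1 /\
        exists l3, valid n r l3 /\ phi l3 <> c0 /\
          forall z, In z l3 <-> ((In z l1 /\ z <> x) \/ z = y).

Definition card_diff (i j : list nat) : nat :=
  length (nodup Nat.eq_dec (filter (fun x => negb (existsb (Nat.eqb x) j)) i)).

Inductive GPkind := Strong | Weak.

Definition GP (F : hyperfield) (k : GPkind) (n r : nat) (phi : list nat -> C) : Prop :=
  match k with
  | Strong => Adom F n r phi /\ alternating F n r phi /\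
      forall i j, valid n (S r) i -> valid n (r - 1) j ->
        hsum F (gp_terms F r phi i j) c0
  | Weak => Adom F n r phi /\ alternating F n r phi /\ matroid_support n r phi /\
      forall i j, valid n (S r) i -> valid n (r - 1) j -> card_diff i j = 3%nat ->
        hsum F (gp_terms F r phi i j) c0
  end.

(** points of the projective space: classes modulo F^× *)
Definition Pt := (list nat -> C) -> Prop.

Definition cls (F : hyperfield) (phi : list nat -> C) : Pt :=
  fun psi => exists a, hdom F a /\ a <> c0 /\ psi = (fun l => cmul a (phi l)).

Definition Gr (F : hyperfield) (k : GPkind) (n r : nat) (c : Pt) : Prop :=
  exists phi, GP F k n r phi /\ c = cls F phi.

Definition Real (f : C -> C) (F F' : hyperfield) (k : GPkind) (n r : nat)
    (M : Pt) (c : Pt) : Prop :=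
  exists phi, GP F k n r phi /\ c = cls F phi /\ cls F' (fun l => f (phi l)) = M.

(** (relatively) open subsets of F^{E^r} \ {0} (product of Euclidean topologies) *)
Definition fopen (F : hyperfield) (n r : nat) (U : (list nat -> C) -> Prop) : Prop :=
  forall phi, Adom F n r phi -> U phi ->
    exists eps, eps > 0 /\ forall psi, Adom F n r psi ->
      (forall l, valid n r l -> cnorm (csub (phi l) (psi l)) < eps) -> U psi.

(** quotient topology on (F^{E^r} \ {0}) / F^× *)
Definition qopen (F : hyperfield) (n r : nat) (V : Pt -> Prop) : Prop :=
  fopen F n r (fun phi => V (cls F phi)).

(** S (with the subspace topology of [op]) is contractible: there is a
    continuous H : S × [0,1] -> S with H(-,0) = id and H(-,1) constant. *)
Definition contractible {T : Type} (op : (T -> Prop) -> Prop) (S : T -> Prop) : Prop :=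
  exists x0, S x0 /\ exists H : T -> R -> T,
    (forall x t, S x -> 0 <= t <= 1 -> S (H x t)) /\
    (forall x, S x -> H x 0 = x) /\
    (forall x, S x -> H x 1 = x0) /\
    (forall V, op V -> forall x t, S x -> 0 <= t <= 1 -> V (H x t) ->
       exists U, op U /\ U x /\ exists eps, eps > 0 /\
         forall y s, S y -> U y -> 0 <= s <= 1 -> Rabs (s - t) < eps -> V (H y s)).

(** The realization space over each of these hyperfields [F] is contracted by
    the power maps [z ↦ |z|^p ph(z)], [p] running from 1 down to 0.  For
    [0 <= p <= 1] such a map is an endomorphism of [F] (because [x ↦ x^p] is
    increasing and subadditive on [R≥0]), so it maps [F]-realizations of [M]
    to [F]-realizations of [M]; at [p = 1] it is the identity, at [p = 0] it
    is the morphism [F -> F'] itself, whose image of any realization is a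
    fixed representative of [M] inside [F].  The maps are jointly continuous
    away from [0], and zero coordinates are common to all realizations, so the
    homotopy is continuous on the quotient.  For weak realizations over the
    triangle hyperfield the base point also needs the support of a strong
    [K]-Grassmann–Plücker function to be a matroid: basis exchange is read off
    a single Grassmann–Plücker relation. *)

From Pilot Require Import Defs.
From Stdlib Require Import Reals List Arith Lra Lia.
From Stdlib Require Import FunctionalExtensionality PropExtensionality ListDec.
From Coquelicot Require Complex.
Import ListNotations.
(* [Reals] exports its own [C] (binomial coefficients); use the complex numbers of [Defs]. *)
Import Defs.
Set Bullet Behavior "Strict Subproofs".
Open Scope R_scope.

Lemma C_ext (a b : C) : fst a = fst b -> snd a = snd b -> a = b.
Proof. destruct a, b; simpl; intros; subst; reflexivity. Qed.

Ltac cring := apply C_ext; unfold cmul, cadd, csub, cneg, cscale, c0, c1; simpl; ring.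

Lemma cnorm_ge0 z : 0 <= cnorm z.
Proof. apply sqrt_pos. Qed.

Lemma cnorm_mul a b : cnorm (cmul a b) = cnorm a * cnorm b.
Proof. exact (Complex.Cmod_mult a b). Qed.

Lemma cnorm_eq0 z : cnorm z = 0 -> z = c0.
Proof. exact (Complex.Cmod_eq_0 z). Qed.

Lemma cnorm_c0 : cnorm c0 = 0.
Proof. exact Complex.Cmod_0. Qed.

Lemma cnorm_gt0 z : z <> c0 -> 0 < cnorm z.
Proof.
  intro Hz. destruct (cnorm_ge0 z) as [H|H]; auto.
  exfalso; apply Hz, cnorm_eq0; auto.
Qed.

Lemma cnorm_triangle a b : cnorm (cadd a b) <= cnorm a + cnorm b.
Proof. exact (Complex.Cmod_triangle a b). Qed.

Lemma cnorm_neg z : cnorm (cneg z) = cnorm z.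
Proof. unfold cnorm, cneg; simpl. f_equal; ring. Qed.

Lemma cnorm_scale s z : cnorm (cscale s z) = Rabs s * cnorm z.
Proof.
  destruct z as [x y]. cbv [cnorm cscale fst snd].
  replace ((s * x) ^ 2 + (s * y) ^ 2) with (s² * (x ^ 2 + y ^ 2)) by (unfold Rsqr; ring).
  rewrite sqrt_mult_alt by apply Rle_0_sqr. rewrite sqrt_Rsqr_abs; auto.
Qed.

Lemma cnorm_scale_nonneg s z : 0 <= s -> cnorm (cscale s z) = s * cnorm z.
Proof. intro Hs. rewrite cnorm_scale, Rabs_right; lra. Qed.

Lemma cnorm_real x : cnorm (x, 0) = Rabs x.
Proof.
  cbv [cnorm fst snd]. replace (x ^ 2 + 0 ^ 2) with (Rsqr x) by (unfold Rsqr; ring).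
  apply sqrt_Rsqr_abs.
Qed.

Lemma cnorm_c1 : cnorm c1 = 1.
Proof. unfold c1. rewrite cnorm_real. apply Rabs_R1. Qed.

Lemma cnorm_sub_sym a b : cnorm (csub a b) = cnorm (csub b a).
Proof. rewrite <- cnorm_neg. f_equal. cring. Qed.

Lemma cnorm_sub_ge w z : Rabs (cnorm w - cnorm z) <= cnorm (csub w z).
Proof.
  assert (H1 : cnorm w <= cnorm (csub w z) + cnorm z).
  { replace w with (cadd (csub w z) z) at 1 by cring. apply cnorm_triangle. }
  assert (H2 : cnorm z <= cnorm (csub z w) + cnorm w).
  { replace z with (cadd (csub z w) w) at 1 by cring. apply cnorm_triangle. }
  rewrite cnorm_sub_sym in H2. apply Rabs_le; lra.
Qed.

Lemma csub_diag z : csub z z = c0.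
Proof. cring. Qed.

Lemma c1_neq0 : c1 <> c0.
Proof. unfold c1, c0; intro H; inversion H; lra. Qed.

Lemma cmul_1_l z : cmul c1 z = z.
Proof. cring. Qed.

Lemma cmul_1_r z : cmul z c1 = z.
Proof. cring. Qed.

Lemma cmul_0_l z : cmul c0 z = c0.
Proof. cring. Qed.

Lemma cmul_0_r z : cmul z c0 = c0.
Proof. cring. Qed.

Lemma cmul_assoc a b c : cmul a (cmul b c) = cmul (cmul a b) c.
Proof. cring. Qed.

Lemma cmul_neq0 a b : a <> c0 -> b <> c0 -> cmul a b <> c0.
Proof.
  intros Ha Hb H. apply (f_equal cnorm) in H.
  rewrite cnorm_mul, cnorm_c0 in H.
  apply cnorm_gt0 in Ha; apply cnorm_gt0 in Hb. nra.
Qed.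

Lemma cneg_c0 : cneg c0 = c0.
Proof. cring. Qed.

Lemma cneg_involutive z : cneg (cneg z) = z.
Proof. cring. Qed.

Lemma cmul_m1_m1 : cmul (cneg c1) (cneg c1) = c1.
Proof. cring. Qed.

Lemma cscale_c0 u : cscale u c0 = c0.
Proof. cring. Qed.

Lemma cscale_1 a : cscale 1 a = a.
Proof. cring. Qed.

Lemma cscale_cscale u v a : cscale u (cscale v a) = cscale (u * v) a.
Proof. cring. Qed.

Lemma cscale_neq0 u a : u <> 0 -> a <> c0 -> cscale u a <> c0.
Proof.
  intros Hu Ha H. apply (f_equal cnorm) in H.
  rewrite cnorm_scale, cnorm_c0 in H. apply cnorm_gt0 in Ha.
  apply Rabs_no_R0 in Hu. generalize (Rabs_pos u); nra.
Qed.

Lemma ph_c0 : ph c0 = c0.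
Proof.
  unfold ph. destruct (Req_EM_T (cnorm c0) 0) as [H|H]; auto.
  exfalso; apply H, cnorm_c0.
Qed.

Lemma ph_nz z : z <> c0 -> ph z = cscale (/ cnorm z) z.
Proof.
  intro Hz. unfold ph. destruct (Req_EM_T (cnorm z) 0) as [H|H]; auto.
  exfalso; apply Hz, cnorm_eq0; auto.
Qed.

Lemma cnorm_ph z : z <> c0 -> cnorm (ph z) = 1.
Proof.
  intro Hz. rewrite ph_nz by auto. rewrite cnorm_scale_nonneg.
  - assert (0 < cnorm z) by (apply cnorm_gt0; auto). field; lra.
  - left; apply Rinv_0_lt_compat, cnorm_gt0; auto.
Qed.

Lemma ph_eq0 z : ph z = c0 -> z = c0.
Proof.
  intro H. destruct (Ceq_dec z c0) as [E|E]; auto.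
  apply cnorm_ph in E. rewrite H, cnorm_c0 in E. lra.
Qed.

Lemma ph_scale c z : 0 < c -> ph (cscale c z) = ph z.
Proof.
  intro Hc. destruct (Ceq_dec z c0) as [->|Hz].
  { rewrite cscale_c0. auto. }
  rewrite !ph_nz by (auto; apply cscale_neq0; auto; lra).
  rewrite cnorm_scale_nonneg, cscale_cscale by lra. f_equal.
  assert (0 < cnorm z) by (apply cnorm_gt0; auto). field; lra.
Qed.

Lemma cnorm_mul_ph a : cscale (cnorm a) (ph a) = a.
Proof.
  destruct (Ceq_dec a c0) as [->|H].
  { rewrite ph_c0. apply cscale_c0. }
  rewrite ph_nz, cscale_cscale by auto.
  rewrite Rinv_r by (apply Rgt_not_eq, cnorm_gt0; auto). apply cscale_1.
Qed.

Lemma ph_unit z : cnorm z = 1 -> ph z = z.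
Proof.
  intro H. assert (z <> c0) by (intro E; subst; rewrite cnorm_c0 in H; lra).
  rewrite ph_nz by auto. rewrite H, Rinv_1. apply cscale_1.
Qed.

Lemma toK_c0 : toK c0 = c0.
Proof. unfold toK. destruct (Ceq_dec c0 c0); congruence. Qed.

Lemma toK_eq0 z : toK z = c0 -> z = c0.
Proof.
  unfold toK. destruct (Ceq_dec z c0); auto.
  intro H; exfalso; apply c1_neq0; auto.
Qed.

Lemma toK_nz z : z <> c0 -> toK z = c1.
Proof. unfold toK. destruct (Ceq_dec z c0); congruence. Qed.

(** * Power maps *)

(** [rpow p x = x^p] for [x > 0]; note that [rpow p 0 = 0] even for [p <= 0]. *)
Definition rpow (p x : R) : R := if Req_EM_T x 0 then 0 else Rpower x p.

Lemma rpow_at0 p : rpow p 0 = 0.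
Proof. unfold rpow; destruct (Req_EM_T 0 0); congruence. Qed.

Lemma rpow_gt0_eq p x : 0 < x -> rpow p x = Rpower x p.
Proof. intro H; unfold rpow; destruct (Req_EM_T x 0); [lra|auto]. Qed.

Lemma rpow_ge0 p x : 0 <= rpow p x.
Proof. unfold rpow; destruct (Req_EM_T x 0); [lra|left; apply exp_pos]. Qed.

Lemma rpow_gt0 p x : 0 < x -> 0 < rpow p x.
Proof. intro H. rewrite rpow_gt0_eq by auto. apply exp_pos. Qed.

Lemma rpow_eq0 p x : rpow p x = 0 -> x = 0.
Proof.
  unfold rpow. destruct (Req_EM_T x 0); auto.
  generalize (exp_pos (p * ln x)); unfold Rpower; lra.
Qed.

Lemma rpow_exp0 x : 0 < x -> rpow 0 x = 1.
Proof. intro H; rewrite rpow_gt0_eq by auto; apply Rpower_O; auto. Qed.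

Lemma rpow_base1 p : rpow p 1 = 1.
Proof.
  rewrite rpow_gt0_eq by lra. unfold Rpower. rewrite ln_1, Rmult_0_r. apply exp_0.
Qed.

Lemma rpow_mul p x y : 0 <= x -> 0 <= y -> rpow p (x * y) = rpow p x * rpow p y.
Proof.
  intros Hx Hy.
  destruct (Req_EM_T x 0) as [->|Hx0]. { rewrite Rmult_0_l, rpow_at0; ring. }
  destruct (Req_EM_T y 0) as [->|Hy0]. { rewrite Rmult_0_r, rpow_at0; ring. }
  rewrite !rpow_gt0_eq by nra. symmetry; apply Rpower_mult_distr; lra.
Qed.

Lemma rpow_pred_mul p x : 0 <= x -> rpow (p - 1) x * x = rpow p x.
Proof.
  intro Hx. destruct (Req_EM_T x 0) as [->|Hx0]. { rewrite !rpow_at0; ring. }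
  rewrite !rpow_gt0_eq by lra. rewrite <- (Rpower_1 x) at 2 by lra.
  rewrite <- Rpower_plus. f_equal; ring.
Qed.

Lemma rpow_le p x y : 0 <= p -> 0 <= x <= y -> rpow p x <= rpow p y.
Proof.
  intros Hp Hxy. destruct (Req_EM_T x 0) as [->|Hx0].
  - rewrite rpow_at0; apply rpow_ge0.
  - rewrite !rpow_gt0_eq by lra. apply Rle_Rpower_l; lra.
Qed.

Lemma Rpower_ge_base u p : 0 < u <= 1 -> p <= 1 -> u <= Rpower u p.
Proof.
  intros Hu Hp. unfold Rpower. rewrite <- (exp_ln u) at 1 by lra.
  assert (ln u <= 0).
  { destruct (Req_EM_T u 1) as [->|E]; [rewrite ln_1; lra|].
    left. rewrite <- ln_1. apply ln_increasing; lra. }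
  destruct (Req_EM_T (ln u) (p * ln u)) as [E|E]; [rewrite <- E; lra|].
  left; apply exp_increasing; nra.
Qed.

(** Subadditivity: with [s = x + y], [x/s + y/s = 1 <= (x/s)^p + (y/s)^p]. *)
Lemma rpow_subadd p x y : 0 <= p <= 1 -> 0 <= x -> 0 <= y ->
  rpow p (x + y) <= rpow p x + rpow p y.
Proof.
  intros Hp Hx Hy.
  destruct (Req_EM_T x 0) as [->|Hx0]. { rewrite rpow_at0, !Rplus_0_l; lra. }
  destruct (Req_EM_T y 0) as [->|Hy0]. { rewrite rpow_at0, !Rplus_0_r; lra. }
  set (s := x + y). assert (Hs : 0 < s) by (unfold s; lra).
  assert (Hsplit : forall u, 0 < u <= s -> rpow p u = Rpower (u / s) p * rpow p s
                                          /\ u / s <= Rpower (u / s) p).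
  { intros u Hu. assert (0 < u / s <= 1).
    { split; [apply Rdiv_lt_0_compat; lra|].
      apply Rmult_le_reg_r with s; auto. field_simplify; lra. }
    split; [|apply Rpower_ge_base; lra].
    rewrite !rpow_gt0_eq, Rpower_mult_distr by lra. f_equal; field; lra. }
  destruct (Hsplit x) as (Ex & Gx); [unfold s; lra|].
  destruct (Hsplit y) as (Ey & Gy); [unfold s; lra|].
  rewrite Ex, Ey. assert (x / s + y / s = 1) by (unfold s; field; lra).
  generalize (rpow_ge0 p s); nra.
Qed.

Lemma rpow_sub_le p a b c : 0 <= p <= 1 -> 0 <= b <= a -> 0 <= c -> a - b <= c ->
  rpow p a - rpow p b <= rpow p c.
Proof.
  intros Hp Hab Hc Habc.
  assert (rpow p a <= rpow p (a - b) + rpow p b).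
  { replace a with ((a - b) + b) at 1 by ring. apply rpow_subadd; lra. }
  assert (rpow p (a - b) <= rpow p c) by (apply rpow_le; lra).
  lra.
Qed.

Lemma rpow_triangle p a b c : 0 <= p <= 1 -> 0 <= a -> 0 <= b -> 0 <= c ->
  Rabs (a - b) <= c <= a + b ->
  Rabs (rpow p a - rpow p b) <= rpow p c <= rpow p a + rpow p b.
Proof.
  intros Hp Ha Hb Hc (H1 & H2).
  assert (Hab := Rle_abs (a - b)). assert (Hba := Rle_abs (b - a)).
  rewrite Rabs_minus_sym in Hba. split.
  - destruct (Rle_dec b a).
    + assert (rpow p b <= rpow p a) by (apply rpow_le; lra).
      rewrite Rabs_right by lra. apply rpow_sub_le; lra.
    + assert (rpow p a <= rpow p b) by (apply rpow_le; lra).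
      rewrite Rabs_minus_sym, Rabs_right by lra. apply rpow_sub_le; lra.
  - apply (Rle_trans _ (rpow p (a + b))); [apply rpow_le|apply rpow_subadd]; lra.
Qed.

Lemma rpow_max p a b : 0 <= p -> 0 <= a -> 0 <= b ->
  rpow p (Rmax a b) = Rmax (rpow p a) (rpow p b).
Proof.
  intros Hp Ha Hb. destruct (Rle_dec a b).
  - rewrite !Rmax_right; auto. apply rpow_le; lra.
  - rewrite !Rmax_left; try lra. apply rpow_le; lra.
Qed.

(** [modpow p z = |z|^p ph(z)]: the identity for [p = 1], the phase for [p = 0]. *)
Definition modpow (p : R) (z : C) : C := cscale (rpow (p - 1) (cnorm z)) z.
Arguments modpow : simpl never.

Lemma modpow_c0 p : modpow p c0 = c0.
Proof. apply cscale_c0. Qed.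

Lemma cnorm_modpow p z : cnorm (modpow p z) = rpow p (cnorm z).
Proof.
  unfold modpow. rewrite cnorm_scale_nonneg by apply rpow_ge0.
  apply rpow_pred_mul, cnorm_ge0.
Qed.

Lemma modpow_eq0 p z : modpow p z = c0 -> z = c0.
Proof.
  intro H. apply (f_equal cnorm) in H. rewrite cnorm_modpow, cnorm_c0 in H.
  apply cnorm_eq0, (rpow_eq0 p), H.
Qed.

Lemma modpow_neq0 p z : z <> c0 -> modpow p z <> c0.
Proof. intros H E; apply H, (modpow_eq0 p), E. Qed.

Lemma modpow_c1 p : modpow p c1 = c1.
Proof. unfold modpow. rewrite cnorm_c1, rpow_base1. apply cscale_1. Qed.

Lemma modpow_mul p a b : modpow p (cmul a b) = cmul (modpow p a) (modpow p b).
Proof.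
  unfold modpow. rewrite cnorm_mul, rpow_mul by apply cnorm_ge0. cring.
Qed.

Lemma modpow_neg p z : modpow p (cneg z) = cneg (modpow p z).
Proof. unfold modpow. rewrite cnorm_neg. cring. Qed.

Lemma modpow_1 z : modpow 1 z = z.
Proof.
  destruct (Ceq_dec z c0) as [->|Hz]; [apply modpow_c0|].
  unfold modpow. replace (1 - 1) with 0 by ring.
  rewrite rpow_exp0 by (apply cnorm_gt0; auto). apply cscale_1.
Qed.

Lemma modpow_0 z : modpow 0 z = ph z.
Proof.
  destruct (Ceq_dec z c0) as [->|Hz]; [rewrite modpow_c0, ph_c0; auto|].
  assert (0 < cnorm z) by (apply cnorm_gt0; auto).
  unfold modpow. rewrite ph_nz, rpow_gt0_eq by auto.
  replace (0 - 1) with (- (1)) by ring. rewrite Rpower_Ropp, Rpower_1; auto.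
Qed.

Lemma ph_modpow p z : ph (modpow p z) = ph z.
Proof.
  destruct (Ceq_dec z c0) as [->|Hz]; [rewrite modpow_c0; auto|].
  apply ph_scale, rpow_gt0, cnorm_gt0; auto.
Qed.

Lemma toK_modpow p z : toK (modpow p z) = toK z.
Proof.
  destruct (Ceq_dec z c0) as [->|Hz]; [rewrite modpow_c0; auto|].
  rewrite !toK_nz; auto. apply modpow_neq0; auto.
Qed.

Lemma modpow_real p x : modpow p (x, 0) = (x * rpow (p - 1) (Rabs x), 0).
Proof. unfold modpow. rewrite cnorm_real. cring. Qed.

Lemma modpow_real_nonneg p x : 0 <= x -> modpow p (x, 0) = (rpow p x, 0).
Proof.
  intro Hx. rewrite modpow_real, Rabs_right, Rmult_comm, rpow_pred_mul by lra. auto.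
Qed.

(** * Joint continuity of the power maps away from 0 *)

Lemma continue_in_eps f D x0 : continue_in f D x0 ->
  forall e, 0 < e -> exists d, 0 < d /\
    forall x, D x -> Rabs (x - x0) < d -> Rabs (f x - f x0) < e.
Proof.
  intros Hc e He. destruct (Hc e He) as (d & Hd & H). exists d; split; [lra|].
  intros x Dx Hx. destruct (Req_EM_T x x0) as [->|E].
  - rewrite Rminus_diag, Rabs_R0; auto.
  - apply (H x). repeat split; auto.
Qed.

Lemma Rpower_cont2 x0 a e : 0 < x0 -> 0 < e -> exists d, 0 < d /\
  forall x b, Rabs (x - x0) < d -> Rabs (b - a) < d ->
    Rabs (Rpower x b - Rpower x0 a) < e.
Proof.
  intros Hx0 He.
  destruct (continue_in_eps exp no_cond (a * ln x0)
              (derivable_continuous _ derivable_exp _) e He) as (de & Hde & Hexp).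
  set (K := Rabs a + Rabs (ln x0) + 1).
  assert (HK : 1 <= K) by (unfold K; generalize (Rabs_pos a) (Rabs_pos (ln x0)); lra).
  set (dl := Rmin 1 (de / (2 * K))).
  assert (Hdl : 0 < dl) by (apply Rmin_glb_lt; [lra|apply Rdiv_lt_0_compat; lra]).
  destruct (continue_in_eps ln (fun x => 0 < x) x0 (ln_continue x0 Hx0) dl Hdl)
    as (dln & Hdln & Hln).
  exists (Rmin dln (Rmin x0 (de / (2 * K)))).
  split; [repeat apply Rmin_glb_lt; auto; apply Rdiv_lt_0_compat; lra|].
  intros x b Hx Hb.
  assert (Hx1 := Rlt_le_trans _ _ _ Hx (Rmin_l _ _)).
  assert (Hx2 := Rlt_le_trans _ _ _ Hx (Rle_trans _ _ _ (Rmin_r _ _) (Rmin_l _ _))).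
  assert (Hb2 := Rlt_le_trans _ _ _ Hb (Rle_trans _ _ _ (Rmin_r _ _) (Rmin_r _ _))).
  assert (Hxpos : 0 < x) by (apply Rabs_def2 in Hx2; lra).
  specialize (Hln x Hxpos Hx1).
  assert (Hl1 := Rlt_le_trans _ _ _ Hln (Rmin_l _ _)).
  assert (Hl2 := Rlt_le_trans _ _ _ Hln (Rmin_r _ _)).
  unfold Rpower. apply Hexp; [exact I|].
  replace (b * ln x - a * ln x0) with ((b - a) * ln x + a * (ln x - ln x0)) by ring.
  eapply Rle_lt_trans; [apply Rabs_triang|]. rewrite !Rabs_mult.
  assert (Hlx : Rabs (ln x) <= K).
  { replace (ln x) with ((ln x - ln x0) + ln x0) by ring.
    eapply Rle_trans; [apply Rabs_triang|]. unfold K; generalize (Rabs_pos a); lra. }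
  assert (Ha : Rabs a <= K) by (unfold K; generalize (Rabs_pos (ln x0)); lra).
  assert (E : de / (2 * K) * K = de / 2) by (field; lra).
  generalize (Rabs_pos (b - a)) (Rabs_pos (ln x - ln x0)) (Rabs_pos a); nra.
Qed.

Lemma modpow_cont z0 p eps : z0 <> c0 -> 0 < eps -> exists d, 0 < d /\
  forall w q, cnorm (csub w z0) < d -> Rabs (q - p) < d ->
    cnorm (csub (modpow p z0) (modpow q w)) < eps.
Proof.
  intros Hz0 He. set (x0 := cnorm z0). assert (Hx0 : 0 < x0) by (apply cnorm_gt0; auto).
  set (B := Rpower x0 (p - 1)). assert (HB : 0 < B) by apply exp_pos.
  set (e1 := eps / (2 * (x0 + 1))).
  assert (He1 : 0 < e1) by (apply Rdiv_lt_0_compat; lra).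
  destruct (Rpower_cont2 x0 (p - 1) e1 Hx0 He1) as (dr & Hdr & Hr).
  set (d2 := eps / (2 * (B + 1))). assert (Hd2 : 0 < d2) by (apply Rdiv_lt_0_compat; lra).
  exists (Rmin (Rmin (x0 / 2) 1) (Rmin dr d2)).
  split; [repeat apply Rmin_glb_lt; lra|].
  intros w q Hw Hq.
  assert (Hw1 : cnorm (csub w z0) < Rmin (x0 / 2) 1)
    by (eapply Rlt_le_trans; [exact Hw|apply Rmin_l]).
  assert (Hw2 : cnorm (csub w z0) < Rmin dr d2)
    by (eapply Rlt_le_trans; [exact Hw|apply Rmin_r]).
  assert (Hq1 : Rabs (q - p) < dr)
    by (eapply Rlt_le_trans; [exact Hq|]; eapply Rle_trans; apply Rmin_r || apply Rmin_l).
  generalize (Rmin_l (x0 / 2) 1) (Rmin_r (x0 / 2) 1) (Rmin_l dr d2) (Rmin_r dr d2); intros.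
  assert (Hrev := cnorm_sub_ge w z0). fold x0 in Hrev.
  assert (Hrv : Rabs (cnorm w - x0) < Rmin (x0 / 2) 1) by lra.
  apply Rabs_def2 in Hrv.
  assert (Hwn : 0 < cnorm w) by lra.
  assert (Hr' : Rabs (Rpower (cnorm w) (q - 1) - B) < e1)
    by (apply Hr; [lra|replace (q - 1 - (p - 1)) with (q - p) by ring; lra]).
  unfold modpow. rewrite cnorm_sub_sym, !rpow_gt0_eq by auto. fold x0 B.
  replace (csub (cscale (Rpower (cnorm w) (q - 1)) w) (cscale B z0))
    with (cadd (cscale (Rpower (cnorm w) (q - 1) - B) w) (cscale B (csub w z0))) by cring.
  eapply Rle_lt_trans; [apply cnorm_triangle|].
  rewrite !cnorm_scale, (Rabs_right B) by lra.
  assert (A1 : Rabs (Rpower (cnorm w) (q - 1) - B) * cnorm w <= e1 * (x0 + 1))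
    by (apply Rmult_le_compat; try apply Rabs_pos; lra).
  assert (A2 : e1 * (x0 + 1) = eps / 2) by (unfold e1; field; lra).
  assert (A3 : B * d2 < eps / 2).
  { unfold d2. replace (B * (eps / (2 * (B + 1)))) with (eps / 2 * (B / (B + 1))) by (field; lra).
    assert (B / (B + 1) < 1) by (apply Rmult_lt_reg_r with (B + 1); [lra|]; field_simplify; lra).
    nra. }
  generalize (cnorm_ge0 (csub w z0)); nra.
Qed.

Fixpoint tuples (n r : nat) : list (list nat) :=
  match r with
  | O => [[]]
  | S r' => flat_map (fun i => map (cons i) (tuples n r')) (seq 0 n)
  end.

Lemma In_tuples n r l : valid n r l -> In l (tuples n r).
Proof.
  revert l; induction r as [|r IH]; intros l (Hlen & Hf).
  - destruct l; simpl in *; [auto|discriminate].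
  - destruct l as [|a l]; simpl in *; [discriminate|]. inversion Hf; subst.
    apply in_flat_map. exists a. split; [apply in_seq; lia|].
    apply in_map, IH. split; auto.
Qed.

Lemma uniform_delta {A} (L : list A) (P : A -> R -> Prop) :
  (forall a d d', 0 < d' <= d -> P a d -> P a d') ->
  (forall a, In a L -> exists d, 0 < d /\ P a d) ->
  exists d, 0 < d /\ forall a, In a L -> P a d.
Proof.
  intros Hmono. induction L as [|a L IH]; intro H.
  - exists 1; split; [lra|]. intros a [].
  - destruct IH as (d1 & Hd1 & H1); [intros b Hb; apply H; simpl; auto|].
    destruct (H a) as (d2 & Hd2 & H2); [simpl; auto|].
    assert (Hm : 0 < Rmin d1 d2) by (apply Rmin_glb_lt; auto).
    exists (Rmin d1 d2). split; [auto|].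
    intros b [<-|Hb]; eapply Hmono; [|exact H2| |apply H1; auto];
      split; auto; [apply Rmin_r|apply Rmin_l].
Qed.

(** Coordinates where [phi] vanishes are excluded from the continuity
    requirement, since [modpow] is not jointly continuous at [(0, 0)]. *)
Lemma modpow_tuple_cont n r (phi : list nat -> C) p eps : 0 < eps -> exists delta, 0 < delta /\
  forall psi q, (forall l, valid n r l -> phi l <> c0 -> cnorm (csub (psi l) (phi l)) < delta) ->
    Rabs (q - p) < delta ->
    forall l, valid n r l -> phi l <> c0 ->
      cnorm (csub (modpow p (phi l)) (modpow q (psi l))) < eps.
Proof.
  intro He.
  destruct (uniform_delta (tuples n r) (fun l d => phi l <> c0 -> forall w q,
       cnorm (csub w (phi l)) < d -> Rabs (q - p) < d ->
       cnorm (csub (modpow p (phi l)) (modpow q w)) < eps)) as (delta & Hdelta & Hdl).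
  - intros l d d' Hd' H Hnz w q H1 H2. apply H; auto; lra.
  - intros l _. destruct (Ceq_dec (phi l) c0) as [E|E].
    + exists 1. split; [lra|]. intro; contradiction.
    + destruct (modpow_cont (phi l) p eps E He) as (d & Hd & H). exists d; split; auto.
  - exists delta. split; [auto|]. intros psi q Hpsi Hq l Hl Hnz.
    apply (Hdl l (In_tuples _ _ _ Hl) Hnz); auto.
Qed.

Lemma GP_hdom F k n r phi : GP F k n r phi -> forall l, hdom F (phi l).
Proof. destruct k; simpl; intro H; apply H. Qed.

Lemma GP_Adom F k n r phi : GP F k n r phi -> Adom F n r phi.
Proof. destruct k; simpl; intro H; apply H. Qed.

Record hfield_closed (F : hyperfield) : Prop := {
  hdom_c0 : hdom F c0;
  hdom_c1 : hdom F c1;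
  hdom_neg : forall x, hdom F x -> hdom F (hneg F x);
  hdom_mul : forall a b, hdom F a -> hdom F b -> hdom F (cmul a b);
  hdom_add : forall x y z, hdom F x -> hdom F y -> hadd F x y z -> hdom F z;
  hdom_inv : forall a, hdom F a -> a <> c0 -> exists b, hdom F b /\ cmul b a = c1 }.

Record hmorph (F G : hyperfield) (h : C -> C) : Prop := {
  hmorph_mul : forall a b, h (cmul a b) = cmul (h a) (h b);
  hmorph_c0 : h c0 = c0;
  hmorph_c1 : h c1 = c1;
  hmorph_eq0 : forall x, hdom F x -> h x = c0 -> x = c0;
  hmorph_dom : forall x, hdom F x -> hdom G (h x);
  hmorph_neg : forall x, hdom F x -> h (hneg F x) = hneg G (h x);
  hmorph_add : forall x y z, hdom F x -> hdom F y -> hadd F x y z ->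
                 hadd G (h x) (h y) (h z) }.

Section Transfer.
Variables (F G : hyperfield) (h : C -> C).
Hypotheses (HF : hfield_closed F) (Hh : hmorph F G h).

Lemma sign_dom m : hdom F (Nat.iter m (hneg F) c1).
Proof. induction m; simpl; [apply HF|apply HF; auto]. Qed.

Lemma hmorph_sign m : h (Nat.iter m (hneg F) c1) = Nat.iter m (hneg G) c1.
Proof.
  induction m; simpl; [apply Hh|].
  rewrite (hmorph_neg _ _ _ Hh) by apply sign_dom. congruence.
Qed.

Lemma hsum_dom l z : Forall (hdom F) l -> hsum F l z -> hdom F z.
Proof.
  revert z. induction l as [|a l IH]; simpl; intros z Hl Hs.
  - subst; apply HF.
  - destruct Hs as (y & Hy & Ha). inversion Hl; subst.
    eapply (hdom_add _ HF); [| |exact Ha]; auto.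
Qed.

Lemma hmorph_hsum l z : Forall (hdom F) l -> hsum F l z -> hsum G (map h l) (h z).
Proof.
  revert z. induction l as [|a l IH]; simpl; intros z Hl Hs.
  - subst. apply Hh.
  - destruct Hs as (y & Hy & Ha). inversion Hl; subst. exists (h y). split.
    + apply IH; auto.
    + apply Hh; auto. eapply hsum_dom; eauto.
Qed.

Lemma gp_terms_dom r phi i j : (forall l, hdom F (phi l)) ->
  Forall (hdom F) (gp_terms F r phi i j).
Proof.
  intro Hphi. apply Forall_forall. intros x Hx.
  apply in_map_iff in Hx. destruct Hx as (m & <- & _).
  apply HF; [apply sign_dom|apply HF; auto].
Qed.

Lemma gp_terms_hmorph r phi i j :
  gp_terms G r (fun l => h (phi l)) i j = map h (gp_terms F r phi i j).
Proof.
  unfold gp_terms. rewrite map_map. apply map_ext. intro m.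
  rewrite !(hmorph_mul _ _ _ Hh), hmorph_sign. reflexivity.
Qed.

Lemma Adom_hmorph n r phi : Adom F n r phi -> Adom G n r (fun l => h (phi l)).
Proof.
  intros ((Hd & Hv) & l & Hl & Hnz). refine (conj (conj _ _) _).
  - intro l'; apply Hh; auto.
  - intros l' Hl'. rewrite Hv by auto. apply Hh.
  - exists l; split; [auto|]. intro E; apply Hnz, (hmorph_eq0 _ _ _ Hh); auto.
Qed.

Lemma GP_hmorph k n r phi : GP F k n r phi -> GP G k n r (fun l => h (phi l)).
Proof.
  intro HGP.
  assert (Hd : forall l, hdom F (phi l)) by (destruct k; apply HGP).
  assert (Halt : alternating F n r phi -> alternating G n r (fun l => h (phi l))).
  { intros (Hal1 & Hal2). split.
    - intros l Hl Hnd. rewrite Hal1 by auto. apply Hh.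
    - intros l i j Hl Hij Hj. rewrite Hal2 by auto. apply Hh; auto. }
  assert (Hsum : forall i j, hsum F (gp_terms F r phi i j) c0 ->
                             hsum G (gp_terms G r (fun l => h (phi l)) i j) c0).
  { intros i j Hs. rewrite gp_terms_hmorph, <- (hmorph_c0 _ _ _ Hh).
    apply hmorph_hsum; auto. apply gp_terms_dom; auto. }
  revert HGP. destruct k; simpl.
  - intros (HAd & HAlt & HGP). split; [apply Adom_hmorph; auto|split; [auto|]].
    intros i j Hi Hj. apply Hsum, HGP; auto.
  - intros (HAd & HAlt & HMs & HGP). split; [apply Adom_hmorph; auto|split; [auto|split]].
    + assert (E : forall l, h (phi l) <> c0 <-> phi l <> c0).
      { intro l; split; intros H1 H2.
        - apply H1; rewrite H2; apply Hh.
        - apply H1, (hmorph_eq0 _ _ _ Hh); auto. }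
      intros l1 l2 Hl1 Hl2 H1 H2 x Hx1 Hx2.
      apply E in H1; apply E in H2.
      destruct (HMs l1 l2 Hl1 Hl2 H1 H2 x Hx1 Hx2) as (y & Hy1 & Hy2 & l3 & Hl3 & H3 & Hz3).
      exists y; split; [auto|split; [auto|]].
      exists l3; split; [auto|split; [apply E; auto|auto]].
    + intros i j Hi Hj Hc. apply Hsum, HGP; auto.
Qed.

End Transfer.

Section Classes.
Variable F : hyperfield.
Hypothesis HF : hfield_closed F.

Lemma cls_self phi : cls F phi phi.
Proof.
  exists c1. split; [apply HF|split; [apply c1_neq0|]].
  apply functional_extensionality; intro l; rewrite cmul_1_l; auto.
Qed.

Lemma cls_scale a phi : hdom F a -> a <> c0 ->
  cls F (fun l => cmul a (phi l)) = cls F phi.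
Proof.
  intros Ha Hna.
  apply functional_extensionality; intro psi; apply propositional_extensionality; split.
  - intros (b & Hb & Hnb & ->). exists (cmul b a).
    split; [apply HF; auto|split; [apply cmul_neq0; auto|]].
    apply functional_extensionality; intro l; apply cmul_assoc.
  - intros (b & Hb & Hnb & ->). destruct (hdom_inv _ HF a Ha Hna) as (a' & Ha' & Ea').
    assert (a' <> c0) by (intros ->; rewrite cmul_0_l in Ea'; apply c1_neq0; auto).
    exists (cmul b a'). split; [apply HF; auto|split; [apply cmul_neq0; auto|]].
    apply functional_extensionality; intro l.
    rewrite cmul_assoc, <- (cmul_assoc b a' a), Ea', cmul_1_r. auto.
Qed.

Lemma cls_eq phi psi : cls F phi = cls F psi ->
  exists a, hdom F a /\ a <> c0 /\ phi = (fun l => cmul a (psi l)).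
Proof. intro E. generalize (cls_self phi). rewrite E. auto. Qed.

Definition contract (x : Pt) (t : R) : Pt :=
  fun psi => exists phi, x = cls F phi /\ cls F (fun l => modpow (1 - t) (phi l)) psi.

Lemma contract_cls phi t : hmorph F F (modpow (1 - t)) -> (forall l, hdom F (phi l)) ->
  contract (cls F phi) t = cls F (fun l => modpow (1 - t) (phi l)).
Proof.
  intros Hm Hd.
  apply functional_extensionality; intro psi; apply propositional_extensionality; split.
  - intros (phi' & E & Hpsi). symmetry in E. destruct (cls_eq _ _ E) as (a & Ha & Hna & ->).
    assert (E2 : (fun l => modpow (1 - t) (cmul a (phi l))) =
                 (fun l => cmul (modpow (1 - t) a) (modpow (1 - t) (phi l))))
      by (apply functional_extensionality; intro l; apply modpow_mul).
    rewrite E2, cls_scale in Hpsi; auto.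
    + apply Hm; auto.
    + apply modpow_neq0; auto.
  - intro H. exists phi; split; auto.
Qed.

Definition near_cls (n r : nat) (phi : list nat -> C) (delta : R) : Pt -> Prop :=
  fun c => exists psi, c = cls F psi /\ Adom F n r psi /\
    exists d, d < delta /\ forall l, valid n r l -> cnorm (csub (phi l) (psi l)) <= d.

Lemma near_cls_center n r phi delta : Adom F n r phi -> 0 < delta ->
  near_cls n r phi delta (cls F phi).
Proof.
  intros HA Hd. exists phi. split; [auto|split; [auto|]].
  exists 0. split; [auto|]. intros l _. rewrite csub_diag, cnorm_c0; lra.
Qed.

(** If [a phi2 = psi] is [d]-close to [phi], then [a phi3] is [delta]-close to
    [phi] for every [phi3] close enough to [phi2]. *)
Lemma qopen_near_cls n r phi delta : qopen F n r (near_cls n r phi delta).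
Proof.
  intros phi2 HA2 (psi & Ec & HApsi & d & Hd & Hclose).
  symmetry in Ec. destruct (cls_eq _ _ Ec) as (a & Ha & Hna & Epsi).
  set (A := cnorm a). assert (HA0 : 0 <= A) by apply cnorm_ge0.
  set (e := (delta - d) / (2 * (A + 1))).
  assert (He : 0 < e) by (apply Rdiv_lt_0_compat; lra).
  assert (HAe : A * e <= (delta - d) / 2).
  { unfold e. replace (A * ((delta - d) / (2 * (A + 1)))) with
      ((delta - d) / 2 * (A / (A + 1))) by (field; lra).
    assert (A / (A + 1) <= 1)
      by (apply Rmult_le_reg_r with (A + 1); [lra|]; field_simplify; lra).
    assert (0 <= (delta - d) / 2) by lra. nra. }
  exists e. split; [auto|]. intros phi3 HA3 H3.
  exists (fun l => cmul a (phi3 l)). split; [|split].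
  - symmetry; apply cls_scale; auto.
  - destruct HA3 as ((Hd3 & Hv3) & l0 & Hl0 & Hnz0). refine (conj (conj _ _) _).
    + intro l; apply HF; auto.
    + intros l Hl; rewrite Hv3 by auto. apply cmul_0_r.
    + exists l0; split; auto. apply cmul_neq0; auto.
  - exists (d + (delta - d) / 2). split; [lra|]. intros l Hl.
    replace (csub (phi l) (cmul a (phi3 l))) with
      (cadd (csub (phi l) (cmul a (phi2 l))) (cmul a (csub (phi2 l) (phi3 l)))) by cring.
    eapply Rle_trans; [apply cnorm_triangle|].
    rewrite cnorm_mul. fold A.
    replace (cmul a (phi2 l)) with (psi l) by (rewrite Epsi; auto).
    specialize (Hclose l Hl). specialize (H3 l Hl).
    assert (A * cnorm (csub (phi2 l) (phi3 l)) <= A * e) by (apply Rmult_le_compat_l; lra).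
    lra.
Qed.

End Classes.

(** * Contracting a realization space *)

(** [f : F -> F'] is the endpoint [p = 0] of the power maps, and restricts
    to the identity on [F' ⊆ F]. *)
Record power_limit (F F' : hyperfield) (f : C -> C) : Prop := {
  limit_id : forall z, hdom F' z -> f z = z;
  limit_c0 : f c0 = c0;
  limit_eq0 : forall z, hdom F z -> f z = c0 -> z = c0;
  modpow0_limit : forall z, hdom F z -> modpow 0 z = f z;
  limit_modpow : forall p z, f (modpow p z) = f z }.

Section Contraction.
Variables (F F' : hyperfield) (f : C -> C) (k k' : GPkind) (n r : nat).
Hypotheses (HF : hfield_closed F) (HF' : hfield_closed F').
Hypothesis Hf : power_limit F F' f.
Hypothesis incl : hmorph F' F (fun z => z).
Hypothesis GP_embed : forall psi, GP F' k' n r psi -> GP F k n r psi.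
Hypothesis hmorph_modpow : forall p, 0 <= p <= 1 -> hmorph F F (modpow p).

Lemma hmorph_contract t : 0 <= t <= 1 -> hmorph F F (modpow (1 - t)).
Proof. intro Ht. apply hmorph_modpow. lra. Qed.

Lemma contract_GP kk phi t : GP F kk n r phi -> 0 <= t <= 1 ->
  contract F (cls F phi) t = cls F (fun l => modpow (1 - t) (phi l)).
Proof.
  intros Hphi Ht. apply contract_cls; auto using hmorph_contract.
  apply (GP_hdom _ _ _ _ _ Hphi).
Qed.

Lemma Real_zeros M phi phi2 : cls F' (fun l => f (phi l)) = M ->
  GP F k n r phi2 -> cls F' (fun l => f (phi2 l)) = M ->
  forall l, phi l = c0 -> phi2 l = c0.
Proof.
  intros Hm Hp2 Hm2 l Hl. rewrite <- Hm in Hm2.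
  destruct (cls_eq F' HF' _ _ Hm2) as (a & Ha & Hna & E).
  apply (limit_eq0 _ _ _ Hf); [apply (GP_hdom _ _ _ _ _ Hp2)|].
  change (f (phi2 l)) with ((fun l => f (phi2 l)) l).
  rewrite E, Hl, (limit_c0 _ _ _ Hf). apply cmul_0_r.
Qed.

Lemma Real_contract M x t : Real f F F' k n r M x -> 0 <= t <= 1 ->
  Real f F F' k n r M (contract F x t).
Proof.
  intros (phi & Hphi & -> & Hm) Ht.
  rewrite (contract_GP k) by auto.
  exists (fun l => modpow (1 - t) (phi l)).
  split; [apply (GP_hmorph F F); auto using hmorph_contract|split; [auto|]].
  rewrite <- Hm. f_equal. apply functional_extensionality; intro l. apply Hf.
Qed.

Lemma contract_at0 M x : Real f F F' k n r M x -> contract F x 0 = x.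
Proof.
  intros (phi & Hphi & -> & _).
  rewrite (contract_GP k) by (auto; lra).
  f_equal. apply functional_extensionality; intro l.
  replace (1 - 0) with 1 by ring. apply modpow_1.
Qed.

Lemma contract_at1 psi0 x : GP F' k' n r psi0 ->
  Real f F F' k n r (cls F' psi0) x -> contract F x 1 = cls F psi0.
Proof.
  intros Hpsi0 (phi & Hphi & -> & Hm).
  rewrite (contract_GP k) by (auto; lra).
  replace (1 - 1) with 0 by ring.
  replace (fun l => modpow 0 (phi l)) with (fun l => f (phi l))
    by (apply functional_extensionality; intro l; symmetry; apply Hf, (GP_hdom _ _ _ _ _ Hphi)).
  destruct (cls_eq F' HF' _ _ Hm) as (a & Ha & Hna & ->).
  apply cls_scale; auto. apply incl; auto.
Qed.

Lemma contract_continuous M V x t : qopen F n r V ->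
  Real f F F' k n r M x -> 0 <= t <= 1 -> V (contract F x t) ->
  exists U, qopen F n r U /\ U x /\ exists eps, eps > 0 /\
    forall y s, Real f F F' k n r M y -> U y -> 0 <= s <= 1 -> Rabs (s - t) < eps ->
      V (contract F y s).
Proof.
  intros HV (phi & Hphi & -> & Hm) Ht HVx.
  rewrite (contract_GP k) in HVx by auto.
  assert (HA := GP_Adom _ _ _ _ _ Hphi).
  destruct (HV (fun l => modpow (1 - t) (phi l))) as (eps & Heps & Hball); auto.
  { apply (Adom_hmorph F F); auto using hmorph_contract. }
  destruct (modpow_tuple_cont n r phi (1 - t) eps Heps) as (delta & Hdelta & Hcont).
  exists (near_cls F n r phi delta).
  split; [apply qopen_near_cls; auto|split; [apply near_cls_center; auto|]].
  exists delta. split; [auto|].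
  intros y s (phi2 & Hphi2 & -> & Hm2) (psi & Ec & HApsi & d & Hd & Hclose) Hs Hst.
  rewrite Ec, contract_cls; auto using hmorph_contract; [|apply HApsi].
  apply Hball; [apply (Adom_hmorph F F); auto using hmorph_contract|].
  intros l Hl. destruct (Ceq_dec (phi l) c0) as [E|E].
  - assert (Epsi : psi l = c0).
    { destruct (cls_eq F HF _ _ (eq_sym Ec)) as (b & _ & _ & ->).
      rewrite (Real_zeros _ _ _ Hm Hphi2 Hm2 l E). apply cmul_0_r. }
    rewrite E, Epsi, !modpow_c0, csub_diag, cnorm_c0. lra.
  - apply Hcont; auto.
    + intros l' Hl' _. rewrite cnorm_sub_sym. specialize (Hclose l' Hl'). lra.
    + replace (1 - s - (1 - t)) with (t - s) by ring. rewrite Rabs_minus_sym. auto.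
Qed.

Theorem Real_contractible psi0 : GP F' k' n r psi0 ->
  contractible (qopen F n r) (Real f F F' k n r (cls F' psi0)).
Proof.
  intro Hpsi0. exists (cls F psi0). split.
  { exists psi0. split; [auto|split; [auto|]]. f_equal.
    apply functional_extensionality; intro l. apply Hf, (GP_hdom _ _ _ _ _ Hpsi0). }
  exists (contract F). split; [|split; [|split]].
  - intros x t Hx Ht. apply Real_contract; auto.
  - apply contract_at0.
  - intros x Hx. apply (contract_at1 psi0); auto.
  - intros V HV x t Hx Ht HVx. apply contract_continuous; auto.
Qed.

End Contraction.

Corollary Real_contractible_incl F F' f k n r psi0 :
  hfield_closed F -> hfield_closed F' -> power_limit F F' f ->
  hmorph F' F (fun z => z) -> (forall p, 0 <= p <= 1 -> hmorph F F (modpow p)) ->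
  GP F' k n r psi0 -> contractible (qopen F n r) (Real f F F' k n r (cls F' psi0)).
Proof.
  intros HF HF' Hf incl Hmod. apply Real_contractible; auto.
  intro psi. exact (GP_hmorph F' F _ HF' incl k n r psi).
Qed.

Definition cinv (a : C) : C :=
  (fst a / (fst a * fst a + snd a * snd a), - snd a / (fst a * fst a + snd a * snd a)).

Lemma cinv_l a : a <> c0 -> cmul (cinv a) a = c1.
Proof.
  intro H. destruct a as [x y].
  assert (0 < x * x + y * y).
  { destruct (Req_EM_T x 0) as [->|]; destruct (Req_EM_T y 0) as [->|]; try nra.
    exfalso; apply H; reflexivity. }
  apply C_ext; unfold cmul, cinv, c1; simpl; field; lra.
Qed.

Lemma Rnn_real z : Rnn_dom z -> exists a, z = (a, 0) /\ 0 <= a.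
Proof. destruct z as [a b]; intros (H1 & H2); simpl in *; subst; eauto. Qed.

Lemma Rnn_mul a b : Rnn_dom a -> Rnn_dom b -> Rnn_dom (cmul a b).
Proof.
  intros (Ha1 & Ha2) (Hb1 & Hb2). unfold cmul, Rnn_dom; simpl; rewrite Ha1, Hb1.
  split; [ring|nra].
Qed.

Lemma Rnn_inv a : Rnn_dom a -> a <> c0 -> exists b, Rnn_dom b /\ cmul b a = c1.
Proof.
  intros Ha Hna. exists (cinv a). split; [|apply cinv_l; auto].
  destruct a as [x y]; destruct Ha as (Hy & Hx); simpl in *; subst y.
  assert (x <> 0) by (intros ->; apply Hna; reflexivity).
  unfold cinv, Rnn_dom; simpl. split; [field; auto|].
  apply Rmult_le_pos; [lra|]. left; apply Rinv_0_lt_compat; nra.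
Qed.

Lemma closed_Htri : hfield_closed Htri.
Proof.
  split; simpl; auto using Rnn_mul, Rnn_inv; try (split; simpl; lra).
  intros x y z _ _ (H & _); auto.
Qed.

Lemma closed_HTtri : hfield_closed HTtri.
Proof.
  split; simpl; auto using Rnn_mul, Rnn_inv; try (split; simpl; lra).
  intros x y z (Hx1 & Hx2) _ [(_ & ->)|(_ & H & _)]; auto.
  split; simpl; auto. eapply Rle_trans; [exact Hx2|apply Rmax_l].
Qed.

Lemma closed_HTR : hfield_closed HTR.
Proof.
  split; simpl; auto.
  - intros x H; unfold cneg; simpl; rewrite H; ring.
  - intros a b Ha Hb; unfold cmul; simpl; rewrite Ha, Hb; ring.
  - intros x y z Hx Hy [(_ & ->)|[(_ & ->)|[(_ & ->)|(_ & H & _)]]]; auto.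
  - intros a Ha Hna. exists (cinv a). split; [|apply cinv_l; auto].
    unfold cinv; simpl; rewrite Ha. lra.
Qed.

Lemma closed_HTC : hfield_closed HTC.
Proof.
  split; simpl; auto. intros a _ Ha. exists (cinv a). split; auto. apply cinv_l; auto.
Qed.

Lemma closed_HK : hfield_closed HK.
Proof.
  split; simpl; auto.
  - intros a b [->| ->] [->| ->]; rewrite ?cmul_0_l, ?cmul_0_r, ?cmul_1_l; auto.
  - intros x y z Hx Hy [(_ & ->)|[(_ & ->)|(_ & _ & H)]]; auto.
  - intros a [->| ->] Hna; [contradiction|]. exists c1; split; auto. apply cmul_1_l.
Qed.

Lemma closed_HS : hfield_closed HS.
Proof.
  split; simpl; unfold S_dom; auto.
  - intros x [->|[->| ->]]; rewrite ?cneg_c0, ?cneg_involutive; auto.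
  - intros a b [->|[->| ->]] [->|[->| ->]];
      rewrite ?cmul_0_l, ?cmul_0_r, ?cmul_1_l, ?cmul_1_r, ?cmul_m1_m1; auto.
  - intros x y z Hx Hy [(_ & ->)|[(_ & ->)|[(_ & _ & ->)|(_ & _ & H)]]]; auto.
  - intros a [->|[->| ->]] Hna; [contradiction| |].
    + exists c1; split; auto. apply cmul_1_l.
    + exists (cneg c1); split; auto. apply cmul_m1_m1.
Qed.

Lemma closed_HPhi : hfield_closed HPhi.
Proof.
  split; simpl; unfold Phi_dom.
  - auto.
  - right; apply cnorm_c1.
  - intros x [->|H]; [left; apply cneg_c0|right; rewrite cnorm_neg; auto].
  - intros a b [->|Ha] [->|Hb]; rewrite ?cmul_0_l, ?cmul_0_r; auto.
    right; rewrite cnorm_mul, Ha, Hb; ring.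
  - intros x y z Hx Hy
      [(_ & ->)|[(_ & ->)|[(_ & _ & H)|(Hnx & _ & _ & s & t & _ & _ & _ & ->)]]]; auto.
    destruct Hx as [Hx|Hx]; [contradiction|]. rewrite Hx, cscale_1.
    destruct (Ceq_dec (cadd (cscale s x) (cscale t y)) c0) as [E|E].
    + left; rewrite E; apply ph_c0.
    + right; apply cnorm_ph; auto.
  - intros a [->|Ha] Hna; [contradiction|]. exists (fst a, - snd a). split.
    + right. rewrite <- Ha. unfold cnorm; simpl. f_equal; ring.
    + apply (f_equal (fun x => x * x)) in Ha. unfold cnorm in Ha.
      rewrite sqrt_sqrt in Ha by nra.
      apply C_ext; unfold cmul, c1; simpl; nra.
Qed.

(** * The power maps are endomorphisms for [0 <= p <= 1] *)

Lemma hmorph_modpow_intro F p :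
  (forall x, hdom F x -> hdom F (modpow p x)) ->
  (forall x, hdom F x -> modpow p (hneg F x) = hneg F (modpow p x)) ->
  (forall x y z, hdom F x -> hdom F y -> hadd F x y z ->
     hadd F (modpow p x) (modpow p y) (modpow p z)) ->
  hmorph F F (modpow p).
Proof.
  intros Hd Hn Ha. split; auto using modpow_mul, modpow_c0, modpow_c1.
  intros x _; apply modpow_eq0.
Qed.

Lemma hmorph_modpow_Htri p : 0 <= p <= 1 -> hmorph Htri Htri (modpow p).
Proof.
  intro Hp. apply hmorph_modpow_intro; [|reflexivity|].
  - intros x Hx. destruct (Rnn_real x Hx) as (a & -> & Ha).
    rewrite modpow_real_nonneg by auto. split; simpl; [auto|apply rpow_ge0].
  - intros x y z Hx Hy (Hz & H).
    destruct (Rnn_real x Hx) as (a & -> & Ha). destruct (Rnn_real y Hy) as (b & -> & Hb).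
    destruct (Rnn_real z Hz) as (c & -> & Hc).
    rewrite !modpow_real_nonneg by auto. simpl in *.
    split; [split; simpl; [auto|apply rpow_ge0]|]. apply rpow_triangle; auto.
Qed.

Lemma hmorph_modpow_HTtri p : 0 <= p <= 1 -> hmorph HTtri HTtri (modpow p).
Proof.
  intro Hp. apply hmorph_modpow_intro; [|reflexivity|].
  - intros x Hx. destruct (Rnn_real x Hx) as (a & -> & Ha).
    rewrite modpow_real_nonneg by auto. split; simpl; [auto|apply rpow_ge0].
  - intros x y z Hx Hy Hadd.
    destruct (Rnn_real x Hx) as (a & -> & Ha). destruct (Rnn_real y Hy) as (b & -> & Hb).
    rewrite !modpow_real_nonneg by auto. cbn [fst snd] in *.
    destruct Hadd as [(Hne & ->)|(Exy & Hz & Hza)].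
    + cbn [fst snd]. assert (Hm : 0 <= Rmax a b) by (apply (Rle_trans _ a); [auto|apply Rmax_l]).
      rewrite modpow_real_nonneg, rpow_max by (auto; lra).
      destruct (Req_EM_T (rpow p a) (rpow p b)) as [E|E]; [right|left; auto].
      rewrite E, Rmax_left by lra.
      split; [auto|split; [split; simpl; [auto|apply rpow_ge0]|simpl; lra]].
    + injection Exy as ->. right. split; [auto|].
      destruct (Rnn_real z Hz) as (c & -> & Hc). rewrite modpow_real_nonneg by auto.
      split; [split; simpl; [auto|apply rpow_ge0]|]. simpl in *. apply rpow_le; lra.
Qed.

Lemma modpow_real_abs p a : exists g, modpow p (a, 0) = (g, 0) /\ Rabs g = rpow p (Rabs a).
Proof.
  exists (a * rpow (p - 1) (Rabs a)). split; [apply modpow_real|].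
  rewrite <- cnorm_real, <- modpow_real, cnorm_modpow, cnorm_real. auto.
Qed.

Lemma Rabs_eq_cases u v : Rabs u = Rabs v -> v = u \/ v = - u.
Proof.
  unfold Rabs. destruct (Rcase_abs u), (Rcase_abs v); intros; [left|right|right|left]; lra.
Qed.

Lemma hmorph_modpow_HTR p : 0 <= p <= 1 -> hmorph HTR HTR (modpow p).
Proof.
  intro Hp. apply hmorph_modpow_intro; [| intros; apply modpow_neg |].
  - intros x Hx. destruct x as [a a']. cbn in Hx; subst a'.
    destruct (modpow_real_abs p a) as (g & -> & _). reflexivity.
  - intros x y z Hx Hy Hadd.
    destruct x as [a a']; destruct y as [b b']; cbn in Hx, Hy; subst a' b'.
    destruct (modpow_real_abs p a) as (ga & Ea & Ha).
    destruct (modpow_real_abs p b) as (gb & Eb & Hb).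
    assert (Hmono : forall u v, Rabs u <= Rabs v -> rpow p (Rabs u) <= rpow p (Rabs v))
      by (intros u v H; apply rpow_le; [lra|split; [apply Rabs_pos|auto]]).
    cbn [hadd HTR fst snd] in Hadd |- *.
    destruct Hadd as [(H & ->)|[(H & ->)|[(H & ->)|(H & Hz1 & Hz2)]]];
      rewrite ?Ea, ?Eb; cbn [fst snd].
    + assert (Hge : Rabs ga >= Rabs gb) by (rewrite Ha, Hb; apply Rle_ge, Hmono; lra).
      destruct Hge as [Hgt|Heq]; [left; auto|].
      destruct (Rabs_eq_cases _ _ Heq) as [->| ->]; [right; right; left; auto|].
      right; right; right. split; [apply C_ext; simpl; lra|split; simpl; [auto|lra]].
    + assert (Hge : Rabs gb >= Rabs ga) by (rewrite Ha, Hb; apply Rle_ge, Hmono; lra).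
      destruct Hge as [Hgt|Heq]; [right; left; auto|].
      destruct (Rabs_eq_cases _ _ Heq) as [->| ->]; [right; right; left; auto|].
      right; right; right. split; [apply C_ext; simpl; lra|split; simpl; [auto|]].
      rewrite Rabs_Ropp; lra.
    + injection H as E. subst b. rewrite Ea in Eb. injection Eb as ->.
      right; right; left; auto.
    + right; right; right. rewrite <- Ea, <- Eb, H, modpow_neg. split; [auto|].
      destruct z as [c c']; cbn in Hz1, Hz2; subst c'.
      destruct (modpow_real_abs p c) as (gc & -> & Hc).
      cbn. split; [auto|]. rewrite Hc, Ha. apply Hmono, Hz2.
Qed.

Lemma on_arc_left a b : on_arc a b a.
Proof.
  exists 1, 0. split; [lra|split; [lra|split; [left; lra|]]].
  replace (cadd (cscale 1 a) (cscale 0 b)) with a by cring.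
  symmetry; apply cnorm_mul_ph.
Qed.

Lemma on_arc_right a b : cnorm a = cnorm b -> on_arc a b b.
Proof.
  intro E. exists 0, 1. split; [lra|split; [lra|split; [right; lra|]]].
  replace (cadd (cscale 0 a) (cscale 1 b)) with b by cring.
  rewrite E. symmetry; apply cnorm_mul_ph.
Qed.

Lemma on_arc_cnorm a b z : on_arc a b z -> z = c0 \/ cnorm z = cnorm a.
Proof.
  intros (s & t & _ & _ & _ & ->).
  destruct (Ceq_dec (cadd (cscale s a) (cscale t b)) c0) as [E|E].
  - left. rewrite E, ph_c0. apply cscale_c0.
  - right. rewrite cnorm_scale_nonneg, cnorm_ph by (auto; apply cnorm_ge0). ring.
Qed.

Lemma on_arc_scale c a b z : 0 < c -> on_arc a b z ->
  on_arc (cscale c a) (cscale c b) (cscale c z).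
Proof.
  intros Hc (s & t & Hs & Ht & Hst & ->). exists s, t. split; [auto|split; [auto|split; [auto|]]].
  replace (cadd (cscale s (cscale c a)) (cscale t (cscale c b)))
    with (cscale c (cadd (cscale s a) (cscale t b))) by cring.
  rewrite ph_scale, cnorm_scale_nonneg, cscale_cscale by lra. reflexivity.
Qed.

Lemma modpow_on_circle p a z : z = c0 \/ cnorm z = cnorm a ->
  modpow p z = cscale (rpow (p - 1) (cnorm a)) z.
Proof. intros [->|E]; [rewrite modpow_c0, cscale_c0; auto|unfold modpow; rewrite E; auto]. Qed.

Lemma hmorph_modpow_HTC p : 0 <= p <= 1 -> hmorph HTC HTC (modpow p).
Proof.
  intro Hp. apply hmorph_modpow_intro; [intros; exact I|intros; apply modpow_neg|].
  intros x y z _ _ Hadd.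
  assert (Hmono : forall u v, cnorm u <= cnorm v -> cnorm (modpow p u) <= cnorm (modpow p v))
    by (intros u v H; rewrite !cnorm_modpow; apply rpow_le; [lra|split; [apply cnorm_ge0|auto]]).
  cbn [hadd HTC] in Hadd |- *.
  destruct Hadd as [(H & ->)|[(H & ->)|[(H & Hz)|(H & Hne & Harc)]]].
  - assert (Hge : cnorm (modpow p x) >= cnorm (modpow p y)) by (apply Rle_ge, Hmono; lra).
    destruct Hge as [Hgt|Heq]; [left; auto|].
    destruct (Ceq_dec (modpow p y) (cneg (modpow p x))) as [E|E].
    + right; right; left. split; [auto|lra].
    + right; right; right. split; [auto|split; [auto|apply on_arc_left]].
  - assert (Hge : cnorm (modpow p y) >= cnorm (modpow p x)) by (apply Rle_ge, Hmono; lra).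
    destruct Hge as [Hgt|Heq]; [right; left; auto|].
    destruct (Ceq_dec (modpow p y) (cneg (modpow p x))) as [E|E].
    + right; right; left. split; [auto|lra].
    + right; right; right. split; [lra|split; [auto|apply on_arc_right; lra]].
  - right; right; left. rewrite H, modpow_neg. split; [auto|apply Hmono; auto].
  - right; right; right.
    set (c := rpow (p - 1) (cnorm x)).
    assert (Hx : x <> c0).
    { intros ->. rewrite cnorm_c0 in H. apply Hne.
      rewrite (cnorm_eq0 y), cneg_c0 by auto. reflexivity. }
    assert (Hc : 0 < c) by (apply rpow_gt0, cnorm_gt0; auto).
    rewrite (modpow_on_circle p x x), (modpow_on_circle p x y), (modpow_on_circle p x z)
      by (eauto using on_arc_cnorm). fold c.
    split; [rewrite !cnorm_scale_nonneg, H by lra; auto|split; [|apply on_arc_scale; auto]].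
    intro E. apply Hne.
    replace y with (cscale (/ c) (cscale c y)) by (rewrite cscale_cscale, Rinv_l by lra; apply cscale_1).
    rewrite E. replace (cneg (cscale c x)) with (cscale c (cneg x)) by cring.
    rewrite cscale_cscale, Rinv_l by lra. apply cscale_1.
Qed.

Lemma hmorph_incl F G :
  (forall x, hdom F x -> hdom G x) ->
  (forall x, hdom F x -> hneg F x = hneg G x) ->
  (forall x y z, hdom F x -> hdom F y -> hadd F x y z -> hadd G x y z) ->
  hmorph F G (fun z => z).
Proof. intros Hd Hn Ha. split; auto. Qed.

Lemma hmorph_K_Htri : hmorph HK Htri (fun z => z).
Proof.
  apply hmorph_incl; [intros x [->| ->]; split; simpl; lra|reflexivity|].
  intros x y z [->| ->] [->| ->] [(E & ->)|[(E & ->)|(E1 & E2 & [->| ->])]];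
    unfold c0, c1 in *; simpl; repeat split; simpl; try lra;
    try (apply Rabs_le; lra); try (injection E; lra); try (injection E1; lra);
    injection E2; lra.
Qed.

Lemma hmorph_K_HTtri : hmorph HK HTtri (fun z => z).
Proof.
  apply hmorph_incl; [intros x [->| ->]; split; simpl; lra|reflexivity|].
  intros x y z [->| ->] [->| ->] [(E & ->)|[(E & ->)|(E1 & E2 & [->| ->])]];
    unfold c0, c1 in *; simpl;
    try (injection E; lra); try (injection E1; lra); try (injection E2; lra).
  all: first [ right; split; [reflexivity|split; [split; simpl; lra|simpl; lra]]
             | left; split; [lra|f_equal; unfold Rmax; destruct (Rle_dec _ _); lra] ].
Qed.

Lemma hmorph_S_HTR : hmorph HS HTR (fun z => z).
Proof.
  apply hmorph_incl; [intros x [->|[->| ->]]; simpl; lra|reflexivity|].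
  intros x y z Hx Hy [(E & ->)|[(E & ->)|[(Hnx & -> & ->)|(Hnx & -> & Hz)]]]; subst.
  - destruct Hy as [->|[->| ->]]; [right; right; left; auto|right; left; split; auto..];
      unfold c0, c1, cneg; simpl; rewrite ?Rabs_Ropp, Rabs_R1, Rabs_R0; lra.
  - destruct Hx as [->|[->| ->]]; [right; right; left; auto|left; split; auto..];
      unfold c0, c1, cneg; simpl; rewrite ?Rabs_Ropp, Rabs_R1, Rabs_R0; lra.
  - right; right; left; auto.
  - right; right; right. split; [auto|].
    destruct Hx as [->|[->| ->]]; [contradiction| |];
      destruct Hz as [->|[->| ->]]; unfold c0, c1, cneg; simpl;
      rewrite ?Rabs_Ropp, ?Rabs_R1, ?Rabs_R0; split; lra.
Qed.

Lemma hmorph_Phi_HTC : hmorph HPhi HTC (fun z => z).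
Proof.
  apply hmorph_incl; [intros; exact I|reflexivity|].
  intros x y z Hx Hy [(E & ->)|[(E & ->)|[(Hnx & -> & Hz)|(Hnx & Hny & Hne & Harc)]]]; subst.
  - destruct Hy as [->|Hy].
    + right; right; left. rewrite cneg_c0; split; [auto|lra].
    + right; left; split; [rewrite Hy, cnorm_c0; lra|auto].
  - destruct Hx as [->|Hx].
    + right; right; left. rewrite cneg_c0; split; [auto|lra].
    + left; split; [rewrite Hx, cnorm_c0; lra|auto].
  - right; right; left. split; [auto|].
    destruct Hx as [->|Hx]; [contradiction|].
    destruct Hz as [->|Hz]; rewrite ?cnorm_c0; lra.
  - right; right; right.
    destruct Hx as [->|Hx]; [contradiction|]. destruct Hy as [->|Hy]; [contradiction|].
    split; [lra|auto].
Qed.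

(** * Supports of strong Grassmann–Plücker functions over [K] are matroids *)

Lemma length_swap_at0 m l : length (swap_at 0 m l) = length l.
Proof. unfold swap_at. rewrite length_map, length_seq. auto. Qed.

Lemma In_swap_at0 m l z : (m < length l)%nat -> In z (swap_at 0 m l) <-> In z l.
Proof.
  intro Hm. unfold swap_at. rewrite in_map_iff. split.
  - intros (k & <- & Hk). apply in_seq in Hk.
    destruct (Nat.eqb k 0); [apply nth_In; lia|].
    destruct (Nat.eqb k m); apply nth_In; lia.
  - intro Hz. destruct (In_nth l z 0%nat Hz) as (k & Hk & <-).
    destruct (Nat.eq_dec k 0) as [->|Hk0]; [destruct (Nat.eq_dec m 0) as [->|Hm0]|].
    + exists 0%nat. split; [auto|apply in_seq; lia].
    + exists m. split; [|apply in_seq; lia].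
      destruct (Nat.eqb_spec m 0); [lia|]. rewrite Nat.eqb_refl. auto.
    + destruct (Nat.eq_dec k m) as [->|Hkm].
      * exists 0%nat. split; [auto|apply in_seq; lia].
      * exists k. split; [|apply in_seq; lia].
        destruct (Nat.eqb_spec k 0); [lia|]. destruct (Nat.eqb_spec k m); [lia|]. auto.
Qed.

Lemma hd_swap_at0 m l : (0 < length l)%nat -> nth 0 (swap_at 0 m l) 0%nat = nth m l 0%nat.
Proof. intro H. destruct l as [|a l]; simpl in *; [lia|auto]. Qed.

Lemma hsum_K_zeros l y : Forall (fun t => t = c0) l -> hsum HK l y -> y = c0.
Proof.
  revert y; induction l as [|a l IH]; simpl; intros y Hl Hs; auto.
  destruct Hs as (w & Hw & Ha). inversion Hl; subst.
  assert (w = c0) by (apply IH; auto). subst.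
  destruct Ha as [(_ & ->)|[(_ & ->)|(E & _)]]; auto.
  exfalso; apply c1_neq0; symmetry; auto.
Qed.

Lemma hsum_K_c1 l : hsum HK (c1 :: l) c0 -> exists t, In t l /\ t <> c0.
Proof.
  intro Hs. destruct (Forall_dec (fun t => t = c0) (fun t => Ceq_dec t c0) l) as [Hall|Hn].
  - exfalso. destruct Hs as (w & Hw & Ha). rewrite (hsum_K_zeros _ _ Hall Hw) in Ha.
    destruct Ha as [(E & _)|[(_ & E)|(_ & E & _)]]; apply c1_neq0; auto.
  - apply neg_Forall_Exists_neg in Hn; [|intro t; apply Ceq_dec].
    apply Exists_exists in Hn. auto.
Qed.

Lemma GP_K_nodup n r psi l : GP HK Strong n r psi -> valid n r l -> psi l <> c0 -> NoDup l.
Proof.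
  intros (_ & (Hal & _) & _) Hl Hnz.
  destruct (NoDup_dec Nat.eq_dec l) as [N|N]; auto. exfalso; apply Hnz, Hal; auto.
Qed.

(** Since [hneg HK] is the identity, moving [x] to the front does not change [psi]. *)
Lemma GP_K_front n r psi l x : GP HK Strong n r psi -> valid n r l -> psi l <> c0 -> In x l ->
  exists j, valid n r (x :: j) /\ psi (x :: j) <> c0 /\ forall z, In z j <-> In z l /\ z <> x.
Proof.
  intros HG Hl Hnz Hx. pose proof HG as (_ & (_ & Hswap) & _).
  destruct Hl as (Hlen & Hf).
  destruct (In_nth l x 0%nat Hx) as (m & Hm & Hmx).
  assert (Hfront : exists l', valid n r l' /\ psi l' <> c0 /\ nth 0 l' 0%nat = x /\
                              forall z, In z l' <-> In z l).
  { destruct (Nat.eq_dec m 0) as [->|Hm0].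
    - exists l. split; [split; auto|split; [auto|split; [auto|reflexivity]]].
    - exists (swap_at 0 m l).
      assert (Hv : valid n r (swap_at 0 m l)).
      { split; [rewrite length_swap_at0; auto|]. apply Forall_forall. intros z Hz.
        apply In_swap_at0 in Hz; [|auto]. rewrite Forall_forall in Hf; auto. }
      split; [auto|split; [|split]].
      + rewrite Hswap; [auto|split; auto|lia|lia].
      + rewrite hd_swap_at0; auto; lia.
      + intro z; apply In_swap_at0; auto. }
  destruct Hfront as (l' & Hv' & Hnz' & Hhd & Hin').
  assert (Hnd := GP_K_nodup _ _ _ _ HG Hv' Hnz').
  destruct l' as [|x' j]; [destruct Hv' as (Hl' & _); simpl in Hl'; lia|].
  simpl in Hhd. subst x'. inversion Hnd as [|? ? Hxj _]; subst.
  exists j. split; [auto|split; [auto|]]. intro z. rewrite <- Hin'. simpl.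
  split; [intro Hz; split; [auto|intros ->; contradiction]|].
  intros ([->|Hz] & Hne); [congruence|auto].
Qed.

Lemma GP_K_matroid n r psi : GP HK Strong n r psi -> matroid_support n r psi.
Proof.
  intros HG. pose proof HG as (HAd & _ & HGP).
  assert (Hd : forall l, hdom HK (psi l)) by apply HAd.
  intros l1 l2 Hl1 Hl2 H1 H2 x Hx1 Hx2.
  destruct (GP_K_front _ _ _ _ _ HG Hl1 H1 Hx1) as (j & Hvxj & Hxj & Hj).
  destruct Hvxj as (Hlenj & Hfj). simpl in Hlenj. apply Forall_cons_iff in Hfj.
  destruct Hfj as (Hxn & Hfj). destruct Hl2 as (Hlen2 & Hf2).
  assert (Hvi : valid n (S r) (x :: l2)) by (split; simpl; [lia|constructor; auto]).
  assert (Hvj : valid n (r - 1) j) by (split; [lia|auto]).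
  specialize (HGP (x :: l2) j Hvi Hvj).
  set (term := fun k => cmul (Nat.iter (S k) (hneg HK) c1)
                 (cmul (psi (remove_at k (x :: l2))) (psi (nth k (x :: l2) 0%nat :: j)))).
  change (hsum HK (term 0%nat :: map term (seq 1 r)) c0) in HGP.
  assert (Hterm0 : term 0%nat = c1).
  { change (cmul c1 (cmul (psi l2) (psi (x :: j))) = c1). rewrite cmul_1_l.
    destruct (Hd l2) as [E|E]; [contradiction|]. destruct (Hd (x :: j)) as [E'|E']; [contradiction|].
    rewrite E, E'. apply cmul_1_l. }
  rewrite Hterm0 in HGP. destruct (hsum_K_c1 _ HGP) as (t & Ht & Htn).
  apply in_map_iff in Ht. destruct Ht as (k & <- & Hk). apply in_seq in Hk.
  destruct k as [|k]; [lia|]. unfold term in Htn. simpl nth in Htn.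
  set (y := nth k l2 0%nat) in *.
  assert (Hyj : psi (y :: j) <> c0) by (intro E; apply Htn; rewrite E, !cmul_0_r; auto).
  assert (Hyl2 : In y l2) by (apply nth_In; lia).
  assert (Hvyj : valid n r (y :: j)).
  { split; simpl; [lia|]. constructor; auto. rewrite Forall_forall in Hf2; auto. }
  assert (Hnd := GP_K_nodup _ _ _ _ HG Hvyj Hyj). inversion Hnd as [|? ? Hynj _]; subst.
  exists y. split; [auto|split].
  - intro Hyl1. apply Hynj, Hj. split; [auto|intros ->; contradiction].
  - exists (y :: j). split; [auto|split; [auto|]].
    intro z. simpl. rewrite Hj. split; intros [E|E]; auto.
Qed.

Lemma GP_strong_weak F n r phi :
  GP F Strong n r phi -> matroid_support n r phi -> GP F Weak n r phi.
Proof.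
  intros (H1 & H2 & H3) H4. split; [auto|split; [auto|split; [auto|]]].
  intros i j Hi Hj _. apply H3; auto.
Qed.

Lemma toK_id z : hdom HK z -> toK z = z.
Proof. intros [->| ->]; [apply toK_c0|apply toK_nz, c1_neq0]. Qed.

Lemma power_limit_toK F : (forall z, hdom F z -> Rnn_dom z) -> power_limit F HK toK.
Proof.
  intro HF. split; auto using toK_id, toK_c0, toK_eq0, toK_modpow.
  intros z Hz. destruct (Rnn_real z (HF z Hz)) as (a & -> & Ha).
  rewrite modpow_real_nonneg by auto. destruct (Req_EM_T a 0) as [->|Ha0].
  - rewrite rpow_at0. symmetry; apply toK_c0.
  - rewrite rpow_exp0, toK_nz by (lra || (intro E; injection E; lra)). reflexivity.
Qed.

Lemma power_limit_ph F F' : (forall z, hdom F' z -> z = c0 \/ cnorm z = 1) -> power_limit F F' ph.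
Proof.
  intro HF'. split; auto using ph_c0, ph_eq0, modpow_0, ph_modpow.
  intros z Hz. destruct (HF' z Hz) as [->|H]; [apply ph_c0|apply ph_unit, H].
Qed.

Lemma GP_K_Htri k n r psi : GP HK Strong n r psi -> GP Htri k n r psi.
Proof.
  intro HG. assert (Hs := GP_hmorph _ _ _ closed_HK hmorph_K_Htri _ _ _ _ HG).
  destruct k; [exact Hs|]. apply GP_strong_weak; [exact Hs|apply GP_K_matroid, HG].
Qed.

Theorem corollary5p4 (k : GPkind) :
  (forall (n r : nat) (M : Pt), Gr HK Strong n r M ->
     contractible (qopen Htri n r) (Real toK Htri HK k n r M) /\
     contractible (qopen HTtri n r) (Real toK HTtri HK Strong n r M)) /\
  (forall (n r : nat) (M : Pt), Gr HS Strong n r M ->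
     contractible (qopen HTR n r) (Real ph HTR HS Strong n r M)) /\
  (forall (n r : nat) (M : Pt), Gr HPhi k n r M ->
     contractible (qopen HTC n r) (Real ph HTC HPhi k n r M)).
Proof.
  split; [|split]; intros n r M (psi0 & Hpsi0 & ->); [split|..].
  - apply (Real_contractible Htri HK toK k Strong); auto using closed_Htri, closed_HK,
      hmorph_K_Htri, hmorph_modpow_Htri, GP_K_Htri.
    apply power_limit_toK. intros z Hz; exact Hz.
  - apply Real_contractible_incl; auto using closed_HTtri, closed_HK, hmorph_K_HTtri,
      hmorph_modpow_HTtri.
    apply power_limit_toK. intros z Hz; exact Hz.
  - apply Real_contractible_incl; auto using closed_HTR, closed_HS, hmorph_S_HTR,
      hmorph_modpow_HTR.
    apply power_limit_ph. intros z [->|[->| ->]]; auto; right;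
      rewrite ?cnorm_neg; apply cnorm_c1.
  - apply Real_contractible_incl; auto using closed_HTC, closed_HPhi, hmorph_Phi_HTC,
      hmorph_modpow_HTC.
    apply power_limit_ph. intros z Hz; exact Hz.
Qed.
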